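(* Let $G$ be a graph (without multiple edges) on the node set $\{1,\dots,N\}$, where $N=n_1+n_2$ with $n_1,n_2\ge 2$ and $N\ge 4$, and assign to each edge $(i,j)\in G$ a fixed real weight $w_{ij}$. Let the labels $(g_1,\dots,g_N)$ be uniformly distributed over all binary vectors with exactly $n_1$ zeros and $n_2$ ones, and set $R_1^w=\sum_{(i,j)\in G} w_{ij}I(g_i=g_j=0)$, $R_2^w=\sum_{(i,j)\in G} w_{ij}I(g_i=g_j=1)$. Define $S_1=\sum_{(i,j)\in G}w_{ij}^2$, $S_2=\sum_{i=1}^N\Big(\sum_{j:(i,j)\in G}w_{ij}\Big)^2-S_1$ (equivalently, the sum of $w_ew_f$ over ordered pairs $(e,f)$ of edges of $G$ sharing at least one endpoint, the case $e=f$ included once), and $S_3=\Big(\sum_{(i,j)\in G}w_{ij}\Big)^2$ (the sum of $w_ew_f$ over all ordered pairs of edges $(e,f)$, including $e=f$). Then, writing $K=\frac{n_1n_2(n_1-1)(n_2-1)}{N(N-1)(N-2)(N-3)}$, $$\mathbf{E}(R_1^w)=\sum_{(i,j)\in G}w_{ij}\frac{n_1(n_1-1)}{N(N-1)},\qquad \mathbf{E}(R_2^w)=\sum_{(i,j)\in G}w_{ij}\frac{n_2(n_2-1)}{N(N-1)},$$ $$\mathbf{Var}(R_1^w)=K\Big\{-S_2+\tfrac{2(2N-3)}{N(N-1)}S_3+\tfrac{N-3}{n_2-1}(S_1+S_2)-\tfrac{4(N-3)}{N(n_2-1)}S_3\Big\},$$ $$\mathbf{Var}(R_2^w)=K\Big\{-S_2+\tfrac{2(2N-3)}{N(N-1)}S_3+\tfrac{N-3}{n_1-1}(S_1+S_2)-\tfrac{4(N-3)}{N(n_1-1)}S_3\Big\},$$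 $$\mathbf{Cov}(R_1^w,R_2^w)=K\Big\{-S_2+\tfrac{2(2N-3)}{N(N-1)}S_3\Big\}.$$
   Context: The labels $g_i$ encode sample membership of the pooled observations ($g_i=0$: first sample of size $n_1$; $g_i=1$: second sample of size $n_2$); the uniform distribution over label vectors with the given counts is the permutation null distribution. Edges are unordered pairs, each counted once in sums over $(i,j)\in G$. *)

From HB Require Import structures.
From mathcomp Require Import all_boot all_order all_algebra.
Set Implicit Arguments. Unset Strict Implicit. Unset Printing Implicit Defensive.
Import Order.TTheory GRing.Theory Num.Theory.
Local Open Scope ring_scope.

(* Label vectors g : 'I_N -> bool ; g i = false encodes g_i = 0 (first sample),
   g i = true encodes g_i = 1 (second sample). *)
Definition labels (N n2 : nat) : {set {ffun 'I_N -> bool}} :=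
  [set g : {ffun 'I_N -> bool} | #|[set i | g i]| == n2].

Definition Eperm {R : realFieldType} (N n2 : nat)
  (X : {ffun 'I_N -> bool} -> R) : R :=
  (\sum_(g in labels N n2) X g) / #|labels N n2|%:R.

Definition Covperm {R : realFieldType} (N n2 : nat)
  (X Y : {ffun 'I_N -> bool} -> R) : R :=
  Eperm n2 (fun g => (X g - Eperm n2 X) * (Y g - Eperm n2 Y)).

Definition Varperm {R : realFieldType} (N n2 : nat)
  (X : {ffun 'I_N -> bool} -> R) : R := Covperm n2 X X.

(* A simple graph is a set G of 2-element subsets (edges) of the node set;
   w assigns a weight to each edge. *)
Definition R1w {R : realFieldType} {N : nat} (G : {set {set 'I_N}})
  (w : {set 'I_N} -> R) (g : {ffun 'I_N -> bool}) : R :=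
  \sum_(e in G) w e *+ [forall i in e, ~~ g i].

Definition R2w {R : realFieldType} {N : nat} (G : {set {set 'I_N}})
  (w : {set 'I_N} -> R) (g : {ffun 'I_N -> bool}) : R :=
  \sum_(e in G) w e *+ [forall i in e, g i].

Definition S1 {R : realFieldType} {N : nat} (G : {set {set 'I_N}})
  (w : {set 'I_N} -> R) : R := \sum_(e in G) w e ^+ 2.

Definition S2 {R : realFieldType} {N : nat} (G : {set {set 'I_N}})
  (w : {set 'I_N} -> R) : R :=
  \sum_(i : 'I_N) (\sum_(e in G | i \in e) w e) ^+ 2 - S1 G w.

Definition S3 {R : realFieldType} {N : nat} (G : {set {set 'I_N}})
  (w : {set 'I_N} -> R) : R := (\sum_(e in G) w e) ^+ 2.

(** Under the permutation null, the labels are [0] on a set [S] and [1] on a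
    disjoint set [T] with probability [n1 ^_ |S| * n2 ^_ |T| / N ^_ (|S| + |T|)]
    (falling factorials), by counting label vectors.  The first two moments of
    [R1w], [R2w] and [R1w * R2w] are double sums over ordered pairs of edges
    [(e, f)] whose terms depend only on [|e :&: f|], which is [0], [1] or [2];
    the pairs of each kind are weighted by [S3], [S1 + S2] (pairs counted with
    the number of their common endpoints) and [S1] (the pairs [e = f]). *)

From HB Require Import structures.
From mathcomp Require Import all_boot all_order all_algebra.
From mathcomp Require Import zify ring lra.
Import Order.TTheory GRing.Theory Num.Theory.
Set Implicit Arguments. Unset Strict Implicit. Unset Printing Implicit Defensive.

Lemma ffactn2 n : n ^_ 2 = n * (n - 1).
Proof. by rewrite ffactnSr ffactn1. Qed.

Lemma ffactnD n s t : n ^_ (s + t) = n ^_ s * (n - s) ^_ t.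
Proof.
elim: t => [|t IHt]; first by rewrite addn0 muln1.
by rewrite addnS !ffactnSr IHt subnDA mulnA.
Qed.

Lemma mul_bin_down_ffact n m s : 'C(n - s, m) * n ^_ s = (n - m) ^_ s * 'C(n, m).
Proof.
elim: s => [|s IHs]; first by rewrite subn0 muln1 mul1n.
rewrite !ffactnSr [n - m - s]subnAC.
transitivity (n ^_ s * ((n - s) * 'C((n - s).-1, m))); first by rewrite -subnS; ring.
by rewrite mul_bin_down [RHS]mulnAC -IHs; ring.
Qed.

Lemma mul_bin_diag_ffact n m t : t <= m -> 'C(n - t, m - t) * n ^_ t = m ^_ t * 'C(n, m).
Proof.
elim: t => [|t IHt] le_tm; first by rewrite !subn0 muln1 mul1n.
rewrite !ffactnSr.
transitivity (n ^_ t * ((n - t) * 'C((n - t).-1, m - t.+1))); first by rewrite -subnS; ring.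
by rewrite mul_bin_diag subnSK // [RHS]mulnAC -(IHt (ltnW le_tm)); ring.
Qed.

Lemma mul_bin_sub_ffact n m s t : t <= m ->
  'C(n - s - t, m - t) * n ^_ (s + t) = (n - m) ^_ s * m ^_ t * 'C(n, m).
Proof.
move=> le_tm; rewrite addnC ffactnD subnAC mulnCA mul_bin_down_ffact.
have -> : n - t - (m - t) = n - m by lia.
by rewrite mulnCA -mulnA [n ^_ t * _]mulnC mul_bin_diag_ffact.
Qed.

Lemma forall_in_set0 (T : finType) (P : pred T) : [forall x in set0, P x].
Proof. by apply/forall_inP => x; rewrite inE. Qed.

Lemma forall_in_setU (T : finType) (A B : {set T}) (P : pred T) :
  [forall x in A :|: B, P x] = [forall x in A, P x] && [forall x in B, P x].
Proof.
apply/forall_inP/andP => [AB_P | [/forall_inP A_P /forall_inP B_P] x].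
  by split; apply/forall_inP => x x_in; apply: AB_P; rewrite inE x_in ?orbT.
by rewrite inE => /orP[/A_P | /B_P].
Qed.

Lemma card_labels_zeros_ones N p (S T : {set 'I_N}) : [disjoint S & T] -> #|T| <= p ->
  #|[set g in labels N p | [forall i in S, ~~ g i] && [forall i in T, g i]]| =
  'C(N - #|S| - #|T|, p - #|T|).
Proof.
move=> dST le_Tp; set D := [set g in _ | _].
have card_free : N - #|S| - #|T| = #|~: (S :|: T)|.
  have := cardsC (S :|: T); rewrite card_ord cardsU (disjoint_setI0 dST) cards0.
  lia.
(* [g] is determined by its ones outside [T], a [(p - #|T|)]-subset of [~: (S :|: T)]. *)
pose free (g : {ffun 'I_N -> bool}) := [set i | g i] :\: T.
have free_inj : {in D &, injective free}.
  move=> g h; rewrite !inE => /and3P[_ _ /forallP gT] /and3P[_ _ /forallP hT] /setP E.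
  apply/ffunP => i; move: (E i); rewrite !inE.
  by case iT: (i \in T) => //=; move: (gT i) (hT i); rewrite iT /= => -> ->.
rewrite -(card_in_imset free_inj) card_free -cards_draws; apply: eq_card => B.
rewrite !inE; apply/imsetP/andP => [[g] | [/subsetP sB /eqP card_B]].
  rewrite !inE => /and3P[/eqP card_g /forallP gS /forallP gT] ->; split.
    apply/subsetP => i; rewrite !inE negb_or => /andP[-> gi]; rewrite andbT.
    by apply: contraL gi => iS; have := gS i; rewrite iS.
  have /setIidPr T_ones : T \subset [set i | g i].
    by apply/subsetP => i iT; have := gT i; rewrite iT inE.
  by rewrite cardsD T_ones card_g.
have dBT : [disjoint B & T].
  by rewrite disjoint_subset; apply/subsetP => i /sB; rewrite !inE negb_or => /andP[].
exists [ffun i => (i \in B) || (i \in T)]; last first.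
  apply/setP => i; rewrite !inE ffunE.
  by case iT: (i \in T); rewrite ?orbT ?orbF ?(disjointFl dBT iT).
rewrite !inE; apply/and3P; split.
- have -> : [set i | [ffun i => (i \in B) || (i \in T)] i] = B :|: T.
    by apply/setP => i; rewrite !inE ffunE.
  by rewrite cardsU (disjoint_setI0 dBT) cards0 subn0 card_B subnK.
- apply/forallP => i; apply/implyP => iS; rewrite ffunE (disjointFr dST iS) orbF.
  by apply/negP => /sB; rewrite !inE iS.
- by apply/forallP => i; apply/implyP => iT; rewrite ffunE iT orbT.
Qed.

Lemma card_labels N p : #|labels N p| = 'C(N, p).
Proof.
have d00 : [disjoint set0 & set0 :> {set 'I_N}] by rewrite -setI_eq0 setI0.
have := @card_labels_zeros_ones N p set0 set0 d00.
rewrite !cards0 !subn0 => /(_ (leq0n p)) <-.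
by apply: eq_card => g; rewrite [in RHS]inE !forall_in_set0 !andbT.
Qed.

Local Open Scope ring_scope.

Lemma natr_ffactSr (R : pzRingType) n k : (n ^_ k.+1)%:R = (n ^_ k)%:R * (n%:R - k%:R) :> R.
Proof.
rewrite ffactnSr natrM; have [le_kn | lt_nk] := leqP k n; first by rewrite natrB.
by rewrite ffact_small // !mul0r.
Qed.

Section Expectation.

Variables (R : realFieldType) (N p : nat).
Implicit Types (X Y : {ffun 'I_N -> bool} -> R) (P : pred {ffun 'I_N -> bool}).

Lemma eq_Eperm X Y : X =1 Y -> Eperm p X = Eperm p Y.
Proof. by move=> eqXY; rewrite /Eperm (eq_bigr _ (fun g _ => eqXY g)). Qed.

Lemma Eperm_sum (I : finType) (A : {pred I}) (F : I -> {ffun 'I_N -> bool} -> R) :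
  Eperm p (fun g => \sum_(i in A) F i g) = \sum_(i in A) Eperm p (F i).
Proof. by rewrite /Eperm exchange_big mulr_suml. Qed.

Lemma EpermMn (c : R) P : Eperm p (fun g => c *+ P g) = c * Eperm p (fun g => (P g)%:R).
Proof.
rewrite /Eperm mulrA mulr_sumr; congr (_ / _).
by apply: eq_bigr => g _; rewrite mulr_natr.
Qed.

Lemma Eperm_indicator P :
  Eperm p (fun g => (P g)%:R) = #|[set g in labels N p | P g]|%:R / #|labels N p|%:R :> R.
Proof.
have -> : #|[set g in labels N p | P g]| = (\sum_(g in labels N p) P g)%N.
  rewrite -[LHS]muln1 -sum_nat_cond_const big_mkcondr /=.
  by apply: eq_bigr => g _; case: (P g).
by rewrite natr_sum.
Qed.

Lemma CovpermE X Y :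
  Covperm p X Y = Eperm p (fun g => X g * Y g) - Eperm p X * Eperm p Y.
Proof.
rewrite /Covperm /Eperm; set M := #|labels N p|%:R.
have [-> | M0] := eqVneq M 0; first by rewrite !invr0 !mulr0 subrr.
set EX := (\sum_(g in _) X g) / M; set EY := (\sum_(g in _) Y g) / M.
rewrite (eq_bigr (fun g => X g * Y g - EX * Y g - EY * X g + EX * EY)); last by move=> g _; ring.
rewrite !big_split /= !sumrN -!mulr_sumr sumr_const -mulr_natr -/M /EX /EY.
by field.
Qed.

Lemma Eperm_zeros_ones (S T : {set 'I_N}) : (p <= N)%N -> [disjoint S & T] ->
  Eperm p (fun g => ([forall i in S, ~~ g i] && [forall i in T, g i])%:R) =
  ((N - p) ^_ #|S| * p ^_ #|T|)%:R / (N ^_ (#|S| + #|T|))%:R :> R.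
Proof.
move=> le_pN dST; rewrite Eperm_indicator card_labels.
have [le_Tp | lt_pT] := leqP #|T| p; last first.
  (* Truncated subtraction makes ['C(_, p - #|T|)] wrong here; the event is empty. *)
  rewrite (ffact_small lt_pT) muln0 mul0r.
  apply/eqP; rewrite mulf_eq0 pnatr_eq0 cards_eq0; apply/orP; left.
  apply/eqP/setP => g; rewrite !inE; apply/negP => /and3P[/eqP card_g _ /forall_inP T_g].
  have : (#|T| <= #|[set i | g i]|)%N by apply/subset_leq_card/subsetP => i /T_g; rewrite inE.
  by rewrite card_g leqNgt lt_pT.
have le_STN : (#|S| + #|T| <= N)%N.
  have := cardsU S T; rewrite (disjoint_setI0 dST) cards0 subn0 => <-.
  by rewrite -[X in (_ <= X)%N](card_ord N) max_card.
rewrite card_labels_zeros_ones //; apply/eqP.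
by rewrite eqr_div ?pnatr_eq0 -?lt0n ?bin_gt0 ?ffact_gt0 // -!natrM mul_bin_sub_ffact.
Qed.

Lemma Eperm_zeros (S : {set 'I_N}) : (p <= N)%N ->
  Eperm p (fun g => [forall i in S, ~~ g i]%:R) = ((N - p) ^_ #|S|)%:R / (N ^_ #|S|)%:R :> R.
Proof.
move=> le_pN; have dS0 : [disjoint S & set0] by rewrite -setI_eq0 setI0.
have := Eperm_zeros_ones le_pN dS0; rewrite cards0 addn0 ffactn0 muln1 => <-.
by apply: eq_Eperm => g; rewrite forall_in_set0 andbT.
Qed.

Lemma Eperm_ones (T : {set 'I_N}) : (p <= N)%N ->
  Eperm p (fun g => [forall i in T, g i]%:R) = (p ^_ #|T|)%:R / (N ^_ #|T|)%:R :> R.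
Proof.
move=> le_pN; have d0T : [disjoint set0 & T] by rewrite -setI_eq0 set0I.
have := Eperm_zeros_ones le_pN d0T; rewrite cards0 add0n ffactn0 mul1n => <-.
by apply: eq_Eperm => g; rewrite forall_in_set0.
Qed.

End Expectation.

Section EdgePairs.

Variables (R : realFieldType) (N : nat) (G : {set {set 'I_N}}) (w : {set 'I_N} -> R).

Lemma S3_pairs : S3 G w = \sum_(e in G) \sum_(f in G) w e * w f.
Proof. by rewrite /S3 expr2 mulr_suml; apply: eq_bigr => e _; rewrite mulr_sumr. Qed.

Lemma S1_pairs : S1 G w = \sum_(e in G) \sum_(f in G) w e * w f * (e == f)%:R.
Proof.
apply: eq_bigr => e eG; rewrite (bigD1 e) //= eqxx mulr1 big1 ?addr0 ?expr2 //.
by move=> f /andP[_ /negPf]; rewrite eq_sym => ->; rewrite mulr0.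
Qed.

Lemma S1_add_S2_pairs :
  S1 G w + S2 G w = \sum_(e in G) \sum_(f in G) w e * w f * #|e :&: f|%:R.
Proof.
rewrite /S2 addrC subrK.
(* Both sides count the triples [(i, e, f)] with [i \in e :&: f]. *)
transitivity (\sum_(i : 'I_N) \sum_(e in G) \sum_(f in G)
                 w e * w f * ((i \in e) && (i \in f))%:R).
  apply: eq_bigr => i _; rewrite expr2 big_distrlr /= big_mkcondr /=.
  apply: eq_bigr => e _; rewrite big_mkcondr /=.
  case: (i \in e) => /=; last by rewrite big1 // => f _; rewrite mulr0.
  by apply: eq_bigr => f _; case: (i \in f); rewrite ?mulr1 ?mulr0.
rewrite exchange_big; apply: eq_bigr => e _; rewrite exchange_big; apply: eq_bigr => f _.
rewrite -mulr_sumr -natr_sum -sum1_card [in RHS]big_mkcond /=.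
by congr (_ * _%:R); apply: eq_bigr => i _; rewrite inE; case: (_ && _).
Qed.

Lemma mul_sum_forall (P Q : pred 'I_N) :
  (\sum_(e in G) w e *+ [forall i in e, P i]) * (\sum_(f in G) w f *+ [forall i in f, Q i]) =
  \sum_(e in G) \sum_(f in G) w e * w f *+ ([forall i in e, P i] && [forall i in f, Q i]).
Proof.
rewrite mulr_suml; apply: eq_bigr => e _; rewrite mulr_sumr; apply: eq_bigr => f _.
by rewrite mulrnAl mulrnAr -mulrnA mulnb andbC.
Qed.

Hypothesis G_edges : {in G, forall e : {set 'I_N}, #|e| = 2%N}.

Lemma sum_edge_pairs (h : nat -> R) :
  \sum_(e in G) \sum_(f in G) w e * w f * h #|e :&: f| =
  h 0%N * S3 G w + (h 1%N - h 0%N) * (S1 G w + S2 G w) + (h 2%N - 2 * h 1%N + h 0%N) * S1 G w.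
Proof.
have h_interp e f : e \in G -> f \in G -> h #|e :&: f| =
    h 0%N + (h 1%N - h 0%N) * #|e :&: f|%:R + (h 2%N - 2 * h 1%N + h 0%N) * (e == f)%:R.
  move=> eG fG; have le_ef2 : (#|e :&: f| <= 2)%N.
    by rewrite -(G_edges eG) subset_leq_card // subsetIl.
  have eq_ef2 : (#|e :&: f| == 2%N) = (e == f).
    apply/eqP/eqP => [ef2 | <-]; last by rewrite setIid G_edges.
    have /eqP <- : e :&: f == e by rewrite eqEcard subsetIl ef2 G_edges.
    by apply/eqP; rewrite eqEcard subsetIr ef2 G_edges.
  by move: le_ef2 eq_ef2; case: #|e :&: f| => [|[|[|]]] //= _ <- /=; ring.
rewrite S3_pairs S1_add_S2_pairs S1_pairs !mulr_sumr -!big_split /=.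
apply: eq_bigr => e eG; rewrite !mulr_sumr -!big_split /=; apply: eq_bigr => f fG.
by rewrite h_interp //; ring.
Qed.

End EdgePairs.

Section ColoredEdges.

Variables (R : realFieldType) (N p a : nat) (G : {set {set 'I_N}}) (w : {set 'I_N} -> R).
(* [colored g] is the set of nodes carrying one fixed label under [g], and [a]
   is the size of that sample; [b] below is the size of the other one. *)
Variable colored : {ffun 'I_N -> bool} -> pred 'I_N.
Hypothesis G_edges : {in G, forall e : {set 'I_N}, #|e| = 2%N}.
Hypothesis Eperm_colored : forall S : {set 'I_N},
  Eperm p (fun g => [forall i in S, colored g i]%:R) = (a ^_ #|S|)%:R / (N ^_ #|S|)%:R :> R.

Local Notation X := (fun g => \sum_(e in G) w e *+ [forall i in e, colored g i]).

Lemma Eperm_colored_edges :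
  Eperm p X = \sum_(e in G) w e * ((a * (a - 1))%N%:R / (N * (N - 1))%N%:R).
Proof.
rewrite Eperm_sum; apply: eq_bigr => e eG.
by rewrite EpermMn Eperm_colored G_edges // !ffactn2.
Qed.

Local Notation ratio k := ((a ^_ k)%:R / (N ^_ k)%:R : R).

Lemma Eperm_colored_edges_sqr :
  Eperm p (fun g => X g * X g) =
  ratio 4 * S3 G w + (ratio 3 - ratio 4) * (S1 G w + S2 G w)
  + (ratio 2 - 2 * ratio 3 + ratio 4) * S1 G w.
Proof.
rewrite -(sum_edge_pairs w G_edges (fun k => ratio (4 - k))).
rewrite (eq_Eperm _ (fun g => mul_sum_forall G w (colored g) (colored g))) Eperm_sum.
apply: eq_bigr => e eG; rewrite Eperm_sum; apply: eq_bigr => f fG.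
rewrite EpermMn; under eq_Eperm => g do rewrite -forall_in_setU.
rewrite Eperm_colored; have := cardsUI e f; rewrite (G_edges eG) (G_edges fG) => card_ef.
by have -> : #|e :|: f| = (4 - #|e :&: f|)%N by lia.
Qed.

Variable b : nat.
Hypotheses (a_ge2 : (2 <= a)%N) (b_ge2 : (2 <= b)%N) (N_ab : (a + b)%N = N).

Lemma Varperm_colored_edges :
  Varperm p X =
    (a * b * (a - 1) * (b - 1))%N%:R / (N * (N - 1) * (N - 2) * (N - 3))%N%:R *
    (- S2 G w + (2 * (2 * N - 3))%N%:R / (N * (N - 1))%N%:R * S3 G w
     + (N - 3)%N%:R / (b - 1)%N%:R * (S1 G w + S2 G w)
     - (4 * (N - 3))%N%:R / (N * (b - 1))%N%:R * S3 G w).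
Proof.
rewrite /Varperm CovpermE Eperm_colored_edges_sqr Eperm_colored_edges.
rewrite -mulr_suml /S3; move: (\sum_(e in G) w e) (S1 G w) (S2 G w) => sw s1 s2.
rewrite !natr_ffactSr !ffactn0 -N_ab !natrM !natrB ?natrD; try lia.
have a2 : 2 <= a%:R :> R by rewrite ler_nat.
have b2 : 2 <= b%:R :> R by rewrite ler_nat.
by field; apply/and5P; split; apply/eqP; lra.
Qed.

End ColoredEdges.

Lemma Eperm_R1w_mul_R2w (R : realFieldType) N p (G : {set {set 'I_N}}) (w : {set 'I_N} -> R) :
  (p <= N)%N -> {in G, forall e : {set 'I_N}, #|e| = 2%N} ->
  Eperm p (fun g => R1w G w g * R2w G w g) =
  ((N - p) ^_ 2 * p ^_ 2)%N%:R / (N ^_ 4)%:R * (S3 G w - S2 G w).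
Proof.
move=> le_pN G_edges; set c := _ / _.
transitivity (\sum_(e in G) \sum_(f in G) w e * w f * (if #|e :&: f| == 0%N then c else 0)).
  rewrite (eq_Eperm _ (fun g => mul_sum_forall G w (fun i => ~~ g i) (fun i => g i))).
  rewrite Eperm_sum; apply: eq_bigr => e eG; rewrite Eperm_sum; apply: eq_bigr => f fG.
  rewrite EpermMn; have [/eqP | meet_ef] := eqVneq #|e :&: f| 0%N.
    by rewrite cards_eq0 setI_eq0 => dis_ef; rewrite Eperm_zeros_ones // !G_edges.
  rewrite (@eq_Eperm _ _ p _ (fun=> 0)); first by rewrite /Eperm big1 ?mul0r.
  move=> g; apply/eqP; rewrite pnatr_eq0 eqb0; apply/negP => /andP[/forall_inP e0 /forall_inP f1].
  move: meet_ef; rewrite cards_eq0 => /set0Pn[i]; rewrite inE => /andP[ie i_f].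
  by have := e0 i ie; rewrite f1.
by rewrite (sum_edge_pairs w G_edges (fun k => if k == 0%N then c else 0)) /=; ring.
Qed.

Lemma Covperm_R1w_R2w (R : realFieldType) N p q (G : {set {set 'I_N}}) (w : {set 'I_N} -> R) :
  (2 <= q)%N -> (2 <= p)%N -> (q + p)%N = N -> {in G, forall e : {set 'I_N}, #|e| = 2%N} ->
  Covperm p (R1w G w) (R2w G w) =
    (q * p * (q - 1) * (p - 1))%N%:R / (N * (N - 1) * (N - 2) * (N - 3))%N%:R *
    (- S2 G w + (2 * (2 * N - 3))%N%:R / (N * (N - 1))%N%:R * S3 G w).
Proof.
move=> q_ge2 p_ge2 N_qp G_edges; have le_pN : (p <= N)%N by rewrite -N_qp leq_addl.
have N_p : (N - p)%N = q by rewrite -N_qp addnK.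
have zeros (S : {set 'I_N}) : Eperm p (fun g => [forall i in S, ~~ g i]%:R) =
    (q ^_ #|S|)%:R / (N ^_ #|S|)%:R :> R by rewrite Eperm_zeros // N_p.
have ones (S : {set 'I_N}) := Eperm_ones R S le_pN.
rewrite CovpermE Eperm_R1w_mul_R2w // N_p !ffactn2.
rewrite (Eperm_colored_edges w G_edges zeros) (Eperm_colored_edges w G_edges ones).
rewrite -!mulr_suml /S3; move: (\sum_(e in G) w e) (S2 G w) => sw s2.
rewrite !natr_ffactSr !ffactn0 -N_qp !natrM !natrB ?natrD; try lia.
have q2 : 2 <= q%:R :> R by rewrite ler_nat.
have p2 : 2 <= p%:R :> R by rewrite ler_nat.
by field; apply/and4P; split; apply/eqP; lra.
Qed.

Theorem lemma1 (R : realFieldType) (n1 n2 : nat)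
  (G : {set {set 'I_(n1 + n2)}}) (w : {set 'I_(n1 + n2)} -> R) :
  (2 <= n1)%N -> (2 <= n2)%N ->
  (forall e, e \in G -> #|e| = 2%N) ->
  let N := (n1 + n2)%N in
  let K : R := (n1 * n2 * (n1 - 1) * (n2 - 1))%N%:R /
               (N * (N - 1) * (N - 2) * (N - 3))%N%:R in
  let A : R := - S2 G w + (2 * (2 * N - 3))%N%:R / (N * (N - 1))%N%:R * S3 G w in
  [/\ Eperm n2 (R1w G w) =
        \sum_(e in G) w e * ((n1 * (n1 - 1))%N%:R / (N * (N - 1))%N%:R),
      Eperm n2 (R2w G w) =
        \sum_(e in G) w e * ((n2 * (n2 - 1))%N%:R / (N * (N - 1))%N%:R),
      Varperm n2 (R1w G w) =
        K * (A + (N - 3)%N%:R / (n2 - 1)%N%:R * (S1 G w + S2 G w)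
               - (4 * (N - 3))%N%:R / (N * (n2 - 1))%N%:R * S3 G w),
      Varperm n2 (R2w G w) =
        K * (A + (N - 3)%N%:R / (n1 - 1)%N%:R * (S1 G w + S2 G w)
               - (4 * (N - 3))%N%:R / (N * (n1 - 1))%N%:R * S3 G w)
    & Covperm n2 (R1w G w) (R2w G w) = K * A].
Proof.
move=> n1_ge2 n2_ge2 G_edges N K A.
have le_n2N : (n2 <= N)%N by rewrite leq_addl.
have zeros (S : {set 'I_N}) : Eperm n2 (fun g => [forall i in S, ~~ g i]%:R) =
    (n1 ^_ #|S|)%:R / (N ^_ #|S|)%:R :> R.
  by rewrite Eperm_zeros // addnK.
have ones (S : {set 'I_N}) := Eperm_ones R S le_n2N.
have K_sym : K = (n2 * n1 * (n2 - 1) * (n1 - 1))%N%:R /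
                 (N * (N - 1) * (N - 2) * (N - 3))%N%:R by rewrite /K; congr (_%:R / _); ring.
split.
- exact (Eperm_colored_edges w G_edges zeros).
- exact (Eperm_colored_edges w G_edges ones).
- exact (Varperm_colored_edges w G_edges zeros n1_ge2 n2_ge2 erefl).
- rewrite K_sym; exact (Varperm_colored_edges w G_edges ones n2_ge2 n1_ge2 (addnC n2 n1)).
- exact: Covperm_R1w_R2w n1_ge2 n2_ge2 erefl G_edges.
Qed.
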